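(* Let $f$ be a homeomorphism of a compact metric space $(X,d)$ with the shadowing property such that for every $\epsilon>0$ there is $\delta>0$ with: $d(x,y)<\delta$ implies $V^s_\epsilon(x)\cap V^u_\epsilon(y)\ne\emptyset$. Then $f$ has the limit shadowing property.
   Context: Shadowing: for every $\varepsilon>0$ there is $\delta>0$ such that for every sequence $(x_k)_{k\in\mathbb{Z}}$ with $d(f(x_k),x_{k+1})<\delta$ for all $k$ there is $y$ with $d(f^k(y),x_k)<\varepsilon$ for all $k\in\mathbb{Z}$. $W^s_\epsilon(x)=\{y: d(f^n(x),f^n(y))\le\epsilon\ \forall n\ge0\}$, $W^u_\epsilon(x)=\{y: d(f^{-n}(x),f^{-n}(y))\le\epsilon\ \forall n\ge0\}$, $W^s(x)=\{y: d(f^n(x),f^n(y))\to0\ (n\to+\infty)\}$, $W^u(x)=\{y: d(f^{-n}(x),f^{-n}(y))\to0\ (n\to+\infty)\}$, $V^s_\epsilon(x)=W^s(x)\cap W^s_\epsilon(x)$, $V^u_\epsilon(x)=W^u(x)\cap W^u_\epsilon(x)$. $f$ has the limit shadowing property if for every sequence $(x_k)_{k\in\mathbb{N}}$ with $d(f(x_k),x_{k+1})\to0$ as $k\to\infty$ there is $y\in X$ with $d(f^k(y),x_k)\to0$ as $k\to\infty$. *)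

From Stdlib Require Import Reals Lra ZArith List.
Open Scope R_scope.

Section Dyn.
Context {X : Type} (d : X -> X -> R).

Definition is_metric : Prop :=
  (forall x y, 0 <= d x y) /\
  (forall x y, d x y = 0 <-> x = y) /\
  (forall x y, d x y = d y x) /\
  (forall x y z, d x z <= d x y + d y z).

Definition open_set (U : X -> Prop) : Prop :=
  forall x, U x -> exists r, 0 < r /\ forall y, d x y < r -> U y.

Definition compact_space : Prop :=
  forall (I : Type) (U : I -> X -> Prop),
    (forall i, open_set (U i)) ->
    (forall x, exists i, U i x) ->
    exists l : list I, forall x, exists i, In i l /\ U i x.

Definition continuous_map (h : X -> X) : Prop :=
  forall x eps, 0 < eps -> exists delta, 0 < delta /\
    forall y, d x y < delta -> d (h x) (h y) < eps.

Definition homeomorphism (f g : X -> X) : Prop :=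
  (forall x, g (f x) = x) /\ (forall x, f (g x) = x) /\
  continuous_map f /\ continuous_map g.

Definition fpow (f g : X -> X) (k : Z) (x : X) : X :=
  match k with
  | Z0 => x
  | Zpos p => Nat.iter (Pos.to_nat p) f x
  | Zneg p => Nat.iter (Pos.to_nat p) g x
  end.

Definition shadowing (f g : X -> X) : Prop :=
  forall eps, 0 < eps -> exists delta, 0 < delta /\
    forall xs : Z -> X,
      (forall k, d (f (xs k)) (xs (k + 1)%Z) < delta) ->
      exists y, forall k, d (fpow f g k y) (xs k) < eps.

Definition Ws_eps (f : X -> X) (eps : R) (x : X) : X -> Prop :=
  fun y => forall n : nat, d (Nat.iter n f x) (Nat.iter n f y) <= eps.
Definition Wu_eps (g : X -> X) (eps : R) (x : X) : X -> Prop :=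
  fun y => forall n : nat, d (Nat.iter n g x) (Nat.iter n g y) <= eps.
Definition Ws (f : X -> X) (x : X) : X -> Prop :=
  fun y => Un_cv (fun n => d (Nat.iter n f x) (Nat.iter n f y)) 0.
Definition Wu (g : X -> X) (x : X) : X -> Prop :=
  fun y => Un_cv (fun n => d (Nat.iter n g x) (Nat.iter n g y)) 0.
Definition Vs_eps (f : X -> X) (eps : R) (x : X) : X -> Prop :=
  fun y => Ws f x y /\ Ws_eps f eps x y.
Definition Vu_eps (g : X -> X) (eps : R) (x : X) : X -> Prop :=
  fun y => Wu g x y /\ Wu_eps g eps x y.

Definition limit_shadowing (f : X -> X) : Prop :=
  forall xs : nat -> X,
    Un_cv (fun k => d (f (xs k)) (xs (S k))) 0 ->
    exists y, Un_cv (fun k => d (Nat.iter k f y) (xs k)) 0.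

End Dyn.

(* Let xs be a pseudo-orbit whose one-step errors tend to 0.  By shadowing,
   every tail of xs is traced, to any prescribed precision, by a true orbit.
   We build inductively stages (n_j, y_j, z_j): y_j traces xs from time n_j on
   within e_j <= 2^-j, and z_j is forward asymptotic to y_j.  To pass from
   stage j to j+1 we shadow a later tail by y_{j+1}; at a time n_{j+1} where
   both orbits follow xs, f^n y_{j+1} and f^n z_j are close, and the product
   hypothesis glues them into z_{j+1}, which follows z_j up to time n_{j+1}
   and y_{j+1} afterwards, within 2^-j.  The orbits of the z_j therefore
   converge uniformly on growing windows, and on [n_{j+1}, n_{j+2}) they stay
   within 3*2^-j of xs.  A cluster point p of (z_j), which exists by
   compactness, then limit-shadows xs by continuity of the iterates of f. *)

From Stdlib Require Import Reals ZArith List Lra Lia ClassicalEpsilon.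
Open Scope R_scope.

Lemma iter_cancel {A} (h k : A -> A) (Hhk : forall x, h (k x) = x) n x :
  Nat.iter n h (Nat.iter n k x) = x.
Proof.
  revert x; induction n as [|n IH]; intro x; [reflexivity|].
  rewrite (Nat.iter_succ_r n A k); simpl. now rewrite IH.
Qed.

Lemma iter_inverse_le {A} (h k : A -> A) (Hhk : forall x, h (k x) = x) n m x :
  (m <= n)%nat -> Nat.iter m h (Nat.iter n k x) = Nat.iter (n - m) k x.
Proof.
  intro Hmn.
  replace (Nat.iter n k x) with (Nat.iter m k (Nat.iter (n - m) k x))
    by (rewrite <- Nat.iter_add; f_equal; lia).
  now apply iter_cancel.
Qed.

Lemma iter_inverse_ge {A} (h k : A -> A) (Hhk : forall x, h (k x) = x) n m x :
  (n <= m)%nat -> Nat.iter m h (Nat.iter n k x) = Nat.iter (m - n) h x.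
Proof.
  intro Hnm.
  replace m with ((m - n) + n)%nat by lia.
  rewrite Nat.iter_add, iter_cancel by exact Hhk. f_equal; lia.
Qed.

Lemma fpow_nat {X} (f g : X -> X) n x : fpow f g (Z.of_nat n) x = Nat.iter n f x.
Proof. destruct n; [reflexivity|]. simpl. now rewrite SuccNat2Pos.id_succ. Qed.

Lemma increasing_mono (m : nat -> nat) (Hm : forall i, (m i < m (S i))%nat) a b :
  (a <= b)%nat -> (m a <= m b)%nat.
Proof.
  induction 1 as [|b _ IH]; [lia|]. specialize (Hm b). lia.
Qed.

Lemma increasing_ge_id (m : nat -> nat) (Hm : forall i, (m i < m (S i))%nat) i :
  (i <= m i)%nat.
Proof. induction i as [|i IH]; [lia|]. specialize (Hm i). lia. Qed.

Lemma window (m : nat -> nat) (Hm : forall i, (m i < m (S i))%nat) J k :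
  (m J <= k)%nat -> exists j, (J <= j)%nat /\ (m j <= k < m (S j))%nat.
Proof.
  intro HJ.
  assert (Hcover : forall t, (k < m (J + t))%nat ->
            exists j, (J <= j)%nat /\ (m j <= k < m (S j))%nat).
  { induction t as [|t IH]; intro Hlt.
    - rewrite Nat.add_0_r in Hlt; lia.
    - destruct (Nat.lt_ge_cases k (m (J + t)%nat)) as [Hk|Hk]; [now apply IH|].
      exists (J + t)%nat. rewrite Nat.add_succ_r in Hlt. split; lia. }
  apply (Hcover (S k)). pose proof (increasing_ge_id m Hm (J + S k)). lia.
Qed.

Lemma Un_cv_nonneg_0 (u : nat -> R) : (forall n, 0 <= u n) ->
  Un_cv u 0 <-> forall r, 0 < r -> exists N, forall n, (N <= n)%nat -> u n < r.
Proof.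
  intro Hu. unfold Un_cv, Rdist.
  split; intros H r Hr; destruct (H r Hr) as [N HN]; exists N; intros n Hn;
    specialize (HN n Hn); rewrite Rminus_0_r, Rabs_pos_eq in * by apply Hu; exact HN.
Qed.

Definition scale (j : nat) : R := (/ 2) ^ j.

Lemma scale_pos j : 0 < scale j.
Proof. apply pow_lt; lra. Qed.

Lemma scale_S j : scale (S j) = scale j / 2.
Proof. unfold scale; simpl; field. Qed.

Lemma scale_small eps : 0 < eps -> exists J, forall j, (J <= j)%nat -> scale j < eps.
Proof.
  intro He. destruct (pow_lt_1_zero (/ 2) ltac:(rewrite Rabs_pos_eq; lra) eps He) as [J HJ].
  exists J. intros j Hj. specialize (HJ j Hj).
  rewrite Rabs_pos_eq in HJ by (left; apply scale_pos). exact HJ.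
Qed.

Lemma dependent_choice_seq {T : Type} (P : nat -> T -> Prop) (Rl : nat -> T -> T -> Prop)
  (s0 : T) : P 0%nat s0 ->
  (forall j s, P j s -> exists s', P (S j) s' /\ Rl j s s') ->
  exists u : nat -> T, forall j, P j (u j) /\ Rl j (u j) (u (S j)).
Proof.
  intros H0 Hstep.
  destruct (choice (fun (js : nat * T) s' => P (fst js) (snd js) ->
              P (S (fst js)) s' /\ Rl (fst js) (snd js) s')) as [next Hnext].
  { intros [j s]. destruct (classic (P j s)) as [Hs|Hs].
    - destruct (Hstep j s Hs) as [s' Hs']. now exists s'.
    - exists s. now intro. }
  set (u := fix u j := match j with O => s0 | S j' => next (j', u j') end).
  assert (Hu : forall j, P j (u j)).
  { induction j as [|j IH]; [exact H0|]. exact (proj1 (Hnext (j, u j) IH)). }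
  exists u. intro j. split; [apply Hu|]. exact (proj2 (Hnext (j, u j) (Hu j))).
Qed.

Section Metric.
Context {X : Type} (d : X -> X -> R).
Hypothesis Hm : is_metric d.

Lemma dist_self x : d x x = 0.
Proof. destruct Hm as (_ & Hzero & _). now apply Hzero. Qed.

Lemma iter_continuous (f : X -> X) : continuous_map d f -> forall k x eps, 0 < eps ->
  exists delta, 0 < delta /\
    forall y, d x y < delta -> d (Nat.iter k f x) (Nat.iter k f y) < eps.
Proof.
  intros Hf; induction k as [|k IH]; intros x eps He.
  - exists eps; split; auto.
  - destruct (Hf (Nat.iter k f x) eps He) as (d1 & Hd1 & Hc1).
    destruct (IH x d1 Hd1) as (d2 & Hd2 & Hc2).
    exists d2; split; auto. intros y Hy. apply Hc1, Hc2, Hy.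
Qed.

Definition cluster_point (z : nat -> X) (p : X) : Prop :=
  forall r, 0 < r -> forall N, exists m, (N <= m)%nat /\ d p (z m) < r.

(* In a compact space every sequence has a cluster point: otherwise the balls
   that eventually miss the sequence cover X, and a finite subcover misses
   every late term. *)
Lemma compact_cluster_point : compact_space d -> forall z, exists p, cluster_point z p.
Proof.
  intros Hc z. destruct Hm as (_ & _ & _ & Htri).
  apply NNPP; intro Hnone.
  set (I := {t : X * R * nat | 0 < snd (fst t) /\
             forall m, (snd t <= m)%nat -> snd (fst t) <= d (fst (fst t)) (z m)}).
  set (ball := fun (i : I) (y : X) =>
                 d (fst (fst (proj1_sig i))) y < snd (fst (proj1_sig i))).
  destruct (Hc I ball) as [l Hl].
  - intros i x Hx. exists (snd (fst (proj1_sig i)) - d (fst (fst (proj1_sig i))) x).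
    split; [unfold ball in Hx; lra|]. intros y Hy. unfold ball.
    pose proof (Htri (fst (fst (proj1_sig i))) x y). lra.
  - intro x.
    assert (Hfar : exists r N, 0 < r /\ forall m, (N <= m)%nat -> r <= d x (z m)).
    { apply NNPP; intro Hnear. apply Hnone. exists x. intros r Hr N.
      apply NNPP; intro Hq. apply Hnear. exists r, N. split; auto. intros m HmN.
      apply Rnot_lt_le. intro Hl'. apply Hq. now exists m. }
    destruct Hfar as (r & N & Hr & HN).
    exists (exist _ (x, r, N) (conj Hr HN)). unfold ball; simpl.
    now rewrite dist_self.
  - set (M := list_max (map (fun i : I => snd (proj1_sig i)) l)).
    destruct (Hl (z M)) as (i & Hi & Hin).
    destruct i as [[[x r] N] [Hr HN]].
    unfold ball in Hin; simpl in Hin.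
    assert (HNM : (N <= M)%nat).
    { pose proof (proj1 (list_max_le (map (fun i : I => snd (proj1_sig i)) l) M)
                    (le_n _)) as Hall.
      rewrite Forall_forall in Hall. apply Hall.
      change N with ((fun i : I => snd (proj1_sig i)) (exist _ (x, r, N) (conj Hr HN))).
      now apply in_map. }
    pose proof (HN M HNM) as Hfar. simpl in Hfar. lra.
Qed.

Lemma geometric_chain (p : nat -> X) a t :
  (forall i, (a <= i)%nat -> (i < a + t)%nat -> d (p (S i)) (p i) <= scale i) ->
  d (p (a + t)%nat) (p a) <= 2 * scale a - 2 * scale (a + t).
Proof.
  destruct Hm as (_ & _ & _ & Htri).
  induction t as [|t IH]; intro Hstep.
  - rewrite Nat.add_0_r, dist_self. lra.
  - rewrite Nat.add_succ_r, scale_S.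
    pose proof (Hstep (a + t)%nat ltac:(lia) ltac:(lia)).
    pose proof (Htri (p (S (a + t))) (p (a + t)%nat) (p a)).
    assert (d (p (a + t)%nat) (p a) <= 2 * scale a - 2 * scale (a + t))
      by (apply IH; intros i Hi1 Hi2; apply Hstep; lia).
    lra.
Qed.

End Metric.

Section LimitShadowing.
Context {X : Type} (d : X -> X -> R) (f g : X -> X).
Hypothesis Hm : is_metric d.
Hypothesis Hh : homeomorphism d f g.
Variable xs : nat -> X.
Hypothesis Hxs : Un_cv (fun k => d (f (xs k)) (xs (S k))) 0.

Definition shadows_from (y : X) (n : nat) (eps : R) : Prop :=
  forall k, (n <= k)%nat -> d (Nat.iter k f y) (xs k) < eps.

Definition asymptotic (z y : X) : Prop :=
  forall r, 0 < r -> exists N, forall k, (N <= k)%nat ->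
    d (Nat.iter k f z) (Nat.iter k f y) < r.

(* Shadowing traces arbitrarily late tails of [xs]: a tail, extended backwards
   by a true backward orbit, is a pseudo-orbit of arbitrarily small error. *)
Lemma tail_shadowing : shadowing d f g ->
  forall eps m, 0 < eps -> exists n y, (m <= n)%nat /\ shadows_from y n eps.
Proof.
  intros Hsh eps m He.
  destruct Hm as (Hpos & _ & _ & _). destruct Hh as (_ & Hfg & _ & _).
  destruct (Hsh eps He) as (delta & Hd & Htrace).
  destruct (proj1 (Un_cv_nonneg_0 _ (fun k => Hpos _ _)) Hxs delta Hd) as [N HN].
  set (n := Nat.max m N).
  set (ext := fun k : Z => if Z.leb (Z.of_nat n) k then xs (Z.to_nat k)
                          else Nat.iter (Z.to_nat (Z.of_nat n - k)) g (xs n)).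
  destruct (Htrace ext) as [y Hy].
  - intro k. unfold ext.
    destruct (Z.leb_spec (Z.of_nat n) k), (Z.leb_spec (Z.of_nat n) (k + 1)); try lia.
    + replace (Z.to_nat (k + 1)) with (S (Z.to_nat k)) by lia. apply HN. lia.
    + replace (Z.to_nat (Z.of_nat n - k)) with 1%nat by lia.
      replace (Z.to_nat (k + 1)) with n by lia. simpl. now rewrite Hfg, dist_self.
    + replace (Z.to_nat (Z.of_nat n - k)) with (S (Z.to_nat (Z.of_nat n - (k + 1))))
        by lia.
      simpl. now rewrite Hfg, dist_self.
  - exists n, y. split; [lia|]. intros k Hk. specialize (Hy (Z.of_nat k)).
    rewrite fpow_nat in Hy. unfold ext in Hy.
    destruct (Z.leb_spec (Z.of_nat n) (Z.of_nat k)); [|lia].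
    now rewrite Nat2Z.id in Hy.
Qed.

(* It is g^n of a point of V^s(f^n b) /\ V^u(f^n a). *)
Lemma glue (eps D : R)
  (Hprod : forall x y, d x y < D -> exists w, Vs_eps d f eps x w /\ Vu_eps d g eps y w)
  n a b : d (Nat.iter n f b) (Nat.iter n f a) < D ->
  exists z, asymptotic z b /\
    (forall k, (k <= n)%nat -> d (Nat.iter k f z) (Nat.iter k f a) <= eps) /\
    (forall k, (n <= k)%nat -> d (Nat.iter k f z) (Nat.iter k f b) <= eps).
Proof.
  intro Hclose.
  destruct Hm as (Hpos & _ & Hsym & _). destruct Hh as (Hgf & Hfg & _ & _).
  destruct (Hprod _ _ Hclose) as (w & [Hws Hwse] & [_ Hwue]).
  assert (Hfuture : forall k, (n <= k)%nat ->
            Nat.iter k f (Nat.iter n g w) = Nat.iter (k - n) f w /\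
            Nat.iter k f b = Nat.iter (k - n) f (Nat.iter n f b)).
  { intros k Hk. split; [now apply iter_inverse_ge|].
    rewrite <- Nat.iter_add. f_equal; lia. }
  exists (Nat.iter n g w). split; [|split].
  - intros r Hr.
    destruct (proj1 (Un_cv_nonneg_0 _ (fun k => Hpos _ _)) Hws r Hr) as [N HN].
    exists (N + n)%nat. intros k Hk. destruct (Hfuture k ltac:(lia)) as [-> ->].
    rewrite Hsym. apply HN. lia.
  - intros k Hk. rewrite (iter_inverse_le f g Hfg n k w Hk).
    replace (Nat.iter k f a) with (Nat.iter (n - k) g (Nat.iter n f a))
      by (rewrite (iter_inverse_le g f Hgf); [f_equal; lia | lia]).
    rewrite Hsym. apply Hwue.
  - intros k Hk. destruct (Hfuture k Hk) as [-> ->]. rewrite Hsym. apply Hwse.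
Qed.

(* One refinement: a later tail is traced by a new orbit [y'], and gluing it
   to [z] (which follows the old tracing orbit [y]) gives [z'] asymptotic to
   [y'], following [z] up to the new time and [y'] after it. *)
Lemma refine_step (eps e e' : R) : shadowing d f g ->
  (forall x y, d x y < 3 * e -> exists w, Vs_eps d f eps x w /\ Vu_eps d g eps y w) ->
  0 < e -> 0 < e' -> forall n y z, shadows_from y n e -> asymptotic z y ->
  exists n' y' z', (n < n')%nat /\ shadows_from y' n' e' /\ asymptotic z' y' /\
    (forall k, (k <= n')%nat -> d (Nat.iter k f z') (Nat.iter k f z) <= eps) /\
    (forall k, (n' <= k)%nat -> d (Nat.iter k f z') (Nat.iter k f y') <= eps).
Proof.
  intros Hsh Hprod He He' n y z Hy Hzy.
  destruct (Hzy e He) as [N HN].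
  destruct (tail_shadowing Hsh (Rmin e e') (Nat.max (S n) N) ltac:(now apply Rmin_pos))
    as (n' & y' & Hn' & Hy').
  assert (Hclose : d (Nat.iter n' f y') (Nat.iter n' f z) < 3 * e).
  { destruct Hm as (_ & _ & Hsym & Htri).
    pose proof (Hy' n' (le_n _)). pose proof (Rmin_l e e').
    pose proof (Hy n' ltac:(lia)). pose proof (HN n' ltac:(lia)).
    pose proof (Htri (Nat.iter n' f y') (xs n') (Nat.iter n' f z)).
    pose proof (Htri (xs n') (Nat.iter n' f y) (Nat.iter n' f z)).
    rewrite (Hsym (xs n') (Nat.iter n' f y)) in *.
    rewrite (Hsym (Nat.iter n' f y) (Nat.iter n' f z)) in *. lra. }
  destruct (glue eps (3 * e) Hprod n' z y' Hclose) as (z' & Hz'y' & Hbefore & Hafter).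
  exists n', y', z'. repeat split; auto; [lia|].
  intros k Hk. eapply Rlt_le_trans; [now apply Hy'| apply Rmin_r].
Qed.

Lemma product_scales :
  (forall eps, 0 < eps -> exists delta, 0 < delta /\ forall x y, d x y < delta ->
     exists z, Vs_eps d f eps x z /\ Vu_eps d g eps y z) ->
  exists e : nat -> R, forall j, 0 < e j /\ e j <= scale j /\
    forall x y, d x y < 3 * e j -> exists z, Vs_eps d f (scale j) x z /\ Vu_eps d g (scale j) y z.
Proof.
  intro Hl.
  apply (choice (fun j ej => 0 < ej /\ ej <= scale j /\ forall x y, d x y < 3 * ej ->
           exists z, Vs_eps d f (scale j) x z /\ Vu_eps d g (scale j) y z)).
  intro j.
  destruct (Hl (scale j) (scale_pos j)) as (D & HD & Hprod).
  exists (Rmin (scale j) (D / 3)). split; [|split].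
  - apply Rmin_pos; [apply scale_pos | lra].
  - apply Rmin_l.
  - intros x y Hxy. apply Hprod. pose proof (Rmin_r (scale j) (D / 3)). lra.
Qed.

Record stage := { time : nat; tracer : X; glued : X }.

Lemma stages_exist : shadowing d f g ->
  (forall eps, 0 < eps -> exists delta, 0 < delta /\ forall x y, d x y < delta ->
     exists z, Vs_eps d f eps x z /\ Vu_eps d g eps y z) ->
  exists (nn : nat -> nat) (yy zz : nat -> X), forall j,
    (nn j < nn (S j))%nat /\ shadows_from (yy j) (nn j) (scale j) /\
    (forall k, (k <= nn (S j))%nat ->
       d (Nat.iter k f (zz (S j))) (Nat.iter k f (zz j)) <= scale j) /\
    (forall k, (nn (S j) <= k)%nat ->
       d (Nat.iter k f (zz (S j))) (Nat.iter k f (yy (S j))) <= scale j).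
Proof.
  intros Hsh Hl. destruct (product_scales Hl) as [e He].
  set (P := fun j s => shadows_from (tracer s) (time s) (e j) /\
                       asymptotic (glued s) (tracer s)).
  set (Rl := fun j s s' => (time s < time s')%nat /\
    (forall k, (k <= time s')%nat ->
       d (Nat.iter k f (glued s')) (Nat.iter k f (glued s)) <= scale j) /\
    (forall k, (time s' <= k)%nat ->
       d (Nat.iter k f (glued s')) (Nat.iter k f (tracer s')) <= scale j)).
  destruct (tail_shadowing Hsh (e 0%nat) 0 (proj1 (He 0%nat))) as (n0 & y0 & _ & Hy0).
  destruct (dependent_choice_seq P Rl {| time := n0; tracer := y0; glued := y0 |})
    as [u Hu].
  - split; [exact Hy0|]. intros r Hr. exists 0%nat. intros k _. now rewrite dist_self.
  - intros j s [Hs1 Hs2].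
    destruct (He j) as (Hej & _ & Hprod). destruct (He (S j)) as (HeSj & _ & _).
    destruct (refine_step (scale j) (e j) (e (S j)) Hsh Hprod Hej HeSj _ _ _ Hs1 Hs2)
      as (n' & y' & z' & Hlt & Hy' & Hz' & Hbefore & Hafter).
    exists {| time := n'; tracer := y'; glued := z' |}. now repeat split.
  - exists (fun j => time (u j)), (fun j => tracer (u j)), (fun j => glued (u j)).
    intro j. destruct (Hu j) as ([Hshadow _] & Hlt & Hbefore & Hafter).
    repeat split; auto.
    intros k Hk. eapply Rlt_le_trans; [now apply Hshadow | apply He].
Qed.

Section Stages.
Variables (nn : nat -> nat) (yy zz : nat -> X).
Hypothesis Hnn : forall j, (nn j < nn (S j))%nat.
Hypothesis Hyy : forall j, shadows_from (yy j) (nn j) (scale j).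
Hypothesis Hbefore : forall j k, (k <= nn (S j))%nat ->
  d (Nat.iter k f (zz (S j))) (Nat.iter k f (zz j)) <= scale j.
Hypothesis Hafter : forall j k, (nn (S j) <= k)%nat ->
  d (Nat.iter k f (zz (S j))) (Nat.iter k f (yy (S j))) <= scale j.

(* On the window [nn (S j), nn (S (S j))), every later glued orbit stays
   within 3*2^-j of [xs]: it is 2^-j-close to z_{j+1}, which follows y_{j+1}. *)
Lemma glued_track_window j k m :
  (nn (S j) <= k < nn (S (S j)))%nat -> (S j <= m)%nat ->
  d (Nat.iter k f (zz m)) (xs k) <= 3 * scale j.
Proof.
  intros Hk Hjm. destruct Hm as (_ & _ & _ & Htri).
  pose proof (geometric_chain d Hm (fun i => Nat.iter k f (zz i)) (S j) (m - S j)) as Hchain.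
  replace (S j + (m - S j))%nat with m in Hchain by lia.
  assert (Hlate : d (Nat.iter k f (zz m)) (Nat.iter k f (zz (S j))) <= scale j).
  { eapply Rle_trans; [apply Hchain|].
    - intros i Hi _. apply Hbefore.
      pose proof (increasing_mono nn Hnn (S (S j)) (S i) ltac:(lia)). lia.
    - rewrite scale_S. pose proof (scale_pos m). lra. }
  pose proof (Hafter j k ltac:(lia)). pose proof (Hyy (S j) k ltac:(lia)).
  rewrite scale_S in *. pose proof (scale_pos j).
  pose proof (Htri (Nat.iter k f (zz m)) (Nat.iter k f (zz (S j))) (xs k)).
  pose proof (Htri (Nat.iter k f (zz (S j))) (Nat.iter k f (yy (S j))) (xs k)).
  lra.
Qed.

(* A cluster point of the glued points limit-shadows [xs]: at a time k in the
   window of index j, approximate f^k p by f^k z_m with m large. *)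
Lemma cluster_limit_shadows p : cluster_point d zz p ->
  Un_cv (fun k => d (Nat.iter k f p) (xs k)) 0.
Proof.
  intro Hp. destruct Hm as (Hpos & _ & _ & Htri). destruct Hh as (_ & _ & Hfc & _).
  apply (Un_cv_nonneg_0 _ (fun k => Hpos _ _)). intros eps Heps.
  destruct (scale_small (eps / 6) ltac:(lra)) as [J HJ].
  exists (nn (S J)). intros k Hk.
  destruct (window (fun i => nn (S i)) (fun i => Hnn (S i)) J k Hk) as (j & HjJ & Hwin).
  destruct (iter_continuous d f Hfc k p (eps / 2) ltac:(lra)) as (rho & Hrho & Hcont).
  destruct (Hp rho Hrho (S j)) as (m & Hjm & Hpm).
  pose proof (Hcont _ Hpm). pose proof (glued_track_window j k m Hwin Hjm).
  pose proof (HJ j HjJ).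
  pose proof (Htri (Nat.iter k f p) (Nat.iter k f (zz m)) (xs k)). lra.
Qed.

End Stages.
End LimitShadowing.

Theorem mainTheorem8 (X : Type) (d : X -> X -> R) (f g : X -> X) :
  is_metric d -> compact_space d -> homeomorphism d f g ->
  shadowing d f g ->
  (forall eps, 0 < eps -> exists delta, 0 < delta /\
     forall x y, d x y < delta ->
       exists z, Vs_eps d f eps x z /\ Vu_eps d g eps y z) ->
  limit_shadowing d f.
Proof.
  intros Hm Hc Hh Hsh Hl xs Hxs.
  destruct (stages_exist d f g Hm Hh xs Hxs Hsh Hl) as (nn & yy & zz & Hstages).
  destruct (compact_cluster_point d Hm Hc zz) as [p Hp].
  exists p.
  apply (cluster_limit_shadows d f g Hm Hh xs nn yy zz); [| | intro j | intro j | exact Hp];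
    apply Hstages.
Qed.
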